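(* Let $p>3$ be a prime, $q=p^h$, and $a,b\in\mathbb{F}_{q^2}^*$. If there exist $A,B,C,D\in\overline{\mathbb{F}_q}$ such that $$F_{a,b}(X,Y)=-b\bigl(XY+A(X+Y)+C\bigr)\bigl(XY+B(X+Y)+D\bigr),$$ then $N_{a,b}(X)$ and $D_{a,b}(X)$ have a nonconstant common factor.
   Context: $N_{a,b}(X)=a^qX^3+X^2+b^q$, $D_{a,b}(X)=bX^3+X+a$, and $$F_{a,b}(X,Y)=\frac{N_{a,b}(X)D_{a,b}(Y)-N_{a,b}(Y)D_{a,b}(X)}{X-Y}\in\mathbb{F}_{q^2}[X,Y].$$ *)

From HB Require Import structures.
From mathcomp Require Import all_boot all_order all_algebra all_field.
Set Implicit Arguments. Unset Strict Implicit. Unset Printing Implicit Defensive.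
Import GRing.Theory.
Local Open Scope ring_scope.

Definition Npoly (R : nzRingType) (q : nat) (a b : R) : {poly R} :=
  (a ^+ q)%:P * 'X^3 + 'X^2 + (b ^+ q)%:P.

Definition Dpoly (R : nzRingType) (a b : R) : {poly R} :=
  b%:P * 'X^3 + 'X + a%:P.

(* Bivariate polynomials R[X,Y] are represented as {poly {poly R}}:
   the inner variable is X, the outer variable is Y. *)
Definition bivX (R : nzRingType) : {poly {poly R}} := ('X)%:P.
Definition bivY (R : nzRingType) : {poly {poly R}} := 'X.
Definition bivC (R : nzRingType) (c : R) : {poly {poly R}} := c%:P%:P.
Definition liftX (R : nzRingType) (P : {poly R}) : {poly {poly R}} := P%:P.
Definition liftY (R : nzRingType) (P : {poly R}) : {poly {poly R}} :=
  map_poly polyC P.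

(* F_{a,b}(X,Y) = (N(X)D(Y) - N(Y)D(X)) / (X - Y)  (exact division; X - Y has
   unit leading coefficient in Y, so %/ is ordinary Euclidean division) *)
Definition Fpoly (R : idomainType) (q : nat) (a b : R) : {poly {poly R}} :=
  (liftX (Npoly q a b) * liftY (Dpoly a b) - liftY (Npoly q a b) * liftX (Dpoly a b))
    %/ (bivX R - bivY R).

From HB Require Import structures.
From mathcomp Require Import all_boot all_order all_algebra all_field.
From mathcomp Require Import ring.
Import GRing.Theory.
Set Implicit Arguments. Unset Strict Implicit.
Local Open Scope ring_scope.

(* Dividing N(X)D(Y) - N(Y)D(X) by X - Y gives an explicit symmetric polynomial
   of bidegree (2, 2) with coefficients in a^q, b^q, a, b.  Comparing them with
   the coefficients of the factored form gives 1 + b(AB + C + D) = 0 and then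
   b^2 (A^2 - C)(B^2 - D) = 0.  If C = A^2 then -A is a common root of N and D
   (symmetrically -B if D = B^2), so gcd(N, D), which commutes with extending
   the field, is not constant. *)

Definition biquadratic (R : nzRingType) (c : nat -> nat -> R) : {poly {poly R}} :=
  \poly_(j < 3) \poly_(i < 3) c i j.

Lemma coef_biquadratic (R : nzRingType) (c : nat -> nat -> R) i j :
  (i < 3)%N -> (j < 3)%N -> (biquadratic c)`_j`_i = c i j.
Proof. by move=> i3 j3; rewrite coef_poly j3 coef_poly i3. Qed.

Lemma biquadratic_inj (R : nzRingType) (c d : nat -> nat -> R) :
  biquadratic c = biquadratic d -> forall i j, (i < 3)%N -> (j < 3)%N -> c i j = d i j.
Proof. by move=> E i j i3 j3; rewrite -coef_biquadratic // E coef_biquadratic. Qed.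

Lemma biquadraticE (R : comNzRingType) (c : nat -> nat -> R) :
  biquadratic c = \sum_(i < 3) \sum_(j < 3) bivC (c i j) * bivX R ^+ i * bivY R ^+ j.
Proof.
rewrite /biquadratic /bivC /bivX /bivY exchange_big poly_def; apply: eq_bigr => j _.
rewrite poly_def -mul_polyC rmorph_sum mulr_suml; apply: eq_bigr => i _.
by rewrite -mul_polyC rmorphM rmorphXn.
Qed.

Lemma map_biquadratic (R S : nzRingType) (f : {rmorphism R -> S}) (c : nat -> nat -> R) :
  map_poly (map_poly f) (biquadratic c) = biquadratic (fun i j => f (c i j)).
Proof.
apply/polyP => j; rewrite coef_map /= !coef_poly.
case: ifP => _; last by rewrite rmorph0.
apply/polyP => i; rewrite coef_map /= !coef_poly.
by case: ifP; rewrite ?rmorph0.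
Qed.

(* Entry [(i, j)] is the coefficient of [X^i Y^j]. *)
Definition Fcoef (R : nzRingType) (al be a b : R) (i j : nat) : R :=
  let ga := al * a - be * b in
  nth 0 (nth [::] [:: [:: - be; a;      ga];
                      [::   a;  ga + 1; al];
                      [::  ga;  al;     - b]] j) i.

Lemma lead_coef_bivXsubY (R : nzRingType) : lead_coef (bivX R - bivY R) = -1.
Proof. by rewrite -opprB lead_coefN /bivX /bivY lead_coefXsubC. Qed.

Lemma Fpoly_biquadratic (R : idomainType) q (a b : R) :
  Fpoly q a b = biquadratic (Fcoef (a ^+ q) (b ^+ q) a b).
Proof.
rewrite /Fpoly; set G := biquadratic _.
suff -> : liftX (Npoly q a b) * liftY (Dpoly a b) - liftY (Npoly q a b) * liftX (Dpoly a b)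
    = (bivX R - bivY R) * G.
  by apply: Pdiv.IdomainUnit.mulKp; rewrite lead_coef_bivXsubY unitrN1.
rewrite /G /Npoly; move: (a ^+ q) (b ^+ q) => al be.
rewrite biquadraticE !big_ord_recr !big_ord0 /= /Fcoef /= /Dpoly /liftX /liftY /bivC /bivX /bivY.
rewrite !rmorphD !rmorphM /= !map_polyC map_polyX.
ring.
Qed.

Lemma map_Fcoef (R S : nzRingType) (f : {rmorphism R -> S}) (al be a b : R) i j :
  f (Fcoef al be a b i j) = Fcoef (f al) (f be) (f a) (f b) i j.
Proof.
by case: j => [|[|[|j]]]; case: i => [|[|[|i]]];
  rewrite /Fcoef /= ?nth_nil ?(rmorph0, rmorph1, rmorphB, rmorphD, rmorphN, rmorphM).
Qed.

Lemma map_Fpoly (R S : idomainType) (f : {rmorphism R -> S}) q (a b : R) :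
  map_poly (map_poly f) (Fpoly q a b) = Fpoly q (f a) (f b).
Proof.
rewrite !Fpoly_biquadratic map_biquadratic -!rmorphXn.
by apply: eq_poly => j _; apply: eq_poly => i _; rewrite map_Fcoef.
Qed.

Definition factored_coef (R : nzRingType) (b A B C D : R) (i j : nat) : R :=
  - b * nth 0 (nth [::] [:: [:: C * D;         A * D + B * C;     A * B];
                            [:: A * D + B * C; 2 * A * B + C + D; A + B];
                            [:: A * B;         A + B;             1]] j) i.

Lemma factored_biquadratic (R : comNzRingType) (b A B C D : R) :
  - bivC b * (bivX R * bivY R + bivC A * (bivX R + bivY R) + bivC C)
          * (bivX R * bivY R + bivC B * (bivX R + bivY R) + bivC D)
  = biquadratic (factored_coef b A B C D).
Proof.
rewrite biquadraticE !big_ord_recr !big_ord0 /= /factored_coef /= /bivC.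
rewrite ?(rmorph1, rmorphD, rmorphM, rmorphN).
ring.
Qed.

Lemma factored_coef_relations (K : fieldType) (al be a b A B C D : K) : b != 0 ->
  (forall i j, (i < 3)%N -> (j < 3)%N -> Fcoef al be a b i j = factored_coef b A B C D i j) ->
  [/\ al = - b * (A + B), a = - b * (A * D + B * C), be = b * (C * D),
      1 + b * (A * B + C + D) = 0 & (A ^+ 2 - C) * (B ^+ 2 - D) = 0].
Proof.
move=> b_neq0 E.
have e21 := E 1 2 isT isT; have e20 := E 0 2 isT isT; have e11 := E 1 1 isT isT.
have e10 := E 1 0 isT isT; have e00 := E 0 0 isT isT.
rewrite /Fcoef /factored_coef /= in e21 e20 e11 e10 e00.
have {}e00 : be = b * (C * D) by apply: oppr_inj; rewrite e00 mulNr.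
have unit_rel : 1 + b * (A * B + C + D) = 0.
  have -> : 1 + b * (A * B + C + D) = (- b * (A * B) + 1) - (- b * (2 * A * B + C + D)).
    by ring.
  by rewrite -e20 e11 subrr.
split=> //; subst al a be.
have : b ^+ 2 * ((A ^+ 2 - C) * (B ^+ 2 - D)) = 0.
  have -> : b ^+ 2 * ((A ^+ 2 - C) * (B ^+ 2 - D)) = b * A * B * (1 + b * (A * B + C + D))
      - (- b * (A + B) * (- b * (A * D + B * C)) - b * (C * D) * b - - b * (A * B)).
    by ring.
  by rewrite unit_rel e20 mulr0 subrr subr0.
by move/eqP; rewrite mulf_eq0 expf_eq0 (negbTE b_neq0) andbF => /eqP.
Qed.

Lemma factored_common_root (R : idomainType) (b A B C D : R) :
  1 + b * (A * B + C + D) = 0 -> (A ^+ 2 - C) * (B ^+ 2 - D) = 0 ->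
  exists x, - b * (A + B) * x ^+ 3 + x ^+ 2 + b * (C * D) = 0
         /\ b * x ^+ 3 + x + - b * (A * D + B * C) = 0.
Proof.
move=> unit_rel /eqP; rewrite mulf_eq0 !subr_eq0 => /orP[/eqP hC | /eqP hD].
- exists (- A); rewrite -hC in unit_rel *; split.
  + by rewrite -[RHS](mulr0 (A ^+ 2)) -unit_rel; ring.
  + by rewrite -[RHS](mulr0 (- A)) -unit_rel; ring.
- exists (- B); rewrite -hD in unit_rel *; split.
  + by rewrite -[RHS](mulr0 (B ^+ 2)) -unit_rel; ring.
  + by rewrite -[RHS](mulr0 (- B)) -unit_rel; ring.
Qed.


Lemma map_Npoly (R S : nzRingType) (f : {rmorphism R -> S}) q (a b : R) :
  map_poly f (Npoly q a b) = Npoly q (f a) (f b).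
Proof. by rewrite /Npoly !rmorphD rmorphM !rmorphXn /= !map_polyC map_polyX. Qed.

Lemma map_Dpoly (R S : nzRingType) (f : {rmorphism R -> S}) (a b : R) :
  map_poly f (Dpoly a b) = Dpoly (f a) (f b).
Proof. by rewrite /Dpoly !rmorphD rmorphM rmorphXn /= !map_polyC map_polyX. Qed.

Lemma horner_Npoly (R : comNzRingType) q (a b x : R) :
  (Npoly q a b).[x] = a ^+ q * x ^+ 3 + x ^+ 2 + b ^+ q.
Proof. by rewrite /Npoly !hornerE. Qed.

Lemma horner_Dpoly (R : comNzRingType) (a b x : R) :
  (Dpoly a b).[x] = b * x ^+ 3 + x + a.
Proof. by rewrite /Dpoly !hornerE. Qed.

Lemma Dpoly_neq0 (R : nzRingType) (a b : R) : Dpoly a b != 0.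
Proof.
have coef1 : (Dpoly a b)`_1 = 1.
  by rewrite /Dpoly !coefD coefCM coefXn coefX coefC mulr0 add0r addr0.
by apply: contra_eq_neq coef1 => ->; rewrite coef0 eq_sym oner_neq0.
Qed.

Lemma size_gcdp_gt1 (F : fieldType) (R : idomainType) (f : {rmorphism F -> R})
    (p q : {poly F}) (x : R) :
  q != 0 -> root (map_poly f p) x -> root (map_poly f q) x -> (1 < size (gcdp p q))%N.
Proof.
move=> q_neq0 px qx; rewrite -(size_map_poly f) gcdp_map.
apply: (root_size_gt1 (a := x)); last by rewrite root_gcd px qx.
by rewrite gcdp_eq0 negb_and !map_poly_eq0 q_neq0 orbT.
Qed.

Theorem mainTheorem9 (p h : nat) (L : finFieldType) (K : closedFieldType)
    (f : {rmorphism L -> K}) :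
  prime p -> (3 < p)%N -> (0 < h)%N -> #|L| = ((p ^ h) ^ 2)%N ->
  (forall x : K, exists2 r : {poly L}, r != 0 & root (map_poly f r) x) ->
  forall a b : L, a != 0 -> b != 0 ->
  (exists A B C D : K,
      map_poly (map_poly f) (Fpoly (p ^ h) a b) =
        - bivC (f b)
        * (bivX K * bivY K + bivC A * (bivX K + bivY K) + bivC C)
        * (bivX K * bivY K + bivC B * (bivX K + bivY K) + bivC D)) ->
  exists g : {poly L}, (1 < size g)%N /\ g %| Npoly (p ^ h) a b /\ g %| Dpoly a b.
Proof.
move=> _ _ _ _ _ a b _ b_neq0 [A [B [C [D]]]].
rewrite map_Fpoly Fpoly_biquadratic factored_biquadratic => /biquadratic_inj coefE.
have fb_neq0 : f b != 0 by rewrite fmorph_eq0.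
have [eN eD eB unit_rel double_rel] := factored_coef_relations fb_neq0 coefE.
have [x [Nx Dx]] := factored_common_root unit_rel double_rel.
exists (gcdp (Npoly (p ^ h) a b) (Dpoly a b)); split; last by rewrite dvdp_gcdl dvdp_gcdr.
apply: (size_gcdp_gt1 (f := f) (x := x) (Dpoly_neq0 a b)).
- by rewrite map_Npoly /root horner_Npoly eN eB Nx.
- by rewrite map_Dpoly /root horner_Dpoly eD Dx.
Qed.
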